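(* An $R$-module $V$ is a Whittaker module of type $\eta$ if and only if there is an ideal $Z_*$ of $Z=Z(R)$ such that \[ V\cong R\otimes_{Z\otimes R(E)}(Z/Z_* )_\eta . \] Moreover, in this case the ideal $Z_*$ is uniquely determined and equals $Z_V$.
   Context: Let $f\in\mathbb{C}[H]$ be a polynomial. $R=R(f)$ is the associative $\mathbb{C}$-algebra generated by $E,F,H$ with relations $EF-FE=f(H)$, $HE-EH=E$, $HF-FH=-F$. Let $R(E)=\mathbb{C}[E]$. Let $u\in\mathbb{C}[H]$ satisfy $f(H)=\tfrac12(u(H+1)-u(H))$ and $\Omega=2FE+u(H+1)$; the center $Z=Z(R)$ is the polynomial ring $\mathbb{C}[\Omega]$. The subalgebra of $R$ generated by $Z$ and $E$ is commutative and identified with $Z\otimes R(E)$. Fix an algebra homomorphism $\eta:R(E)\to\mathbb{C}$ with $\eta(E)\neq0$. For an ideal $Z_*\subseteq Z$, $(Z/Z_* )_\eta$ denotes the $Z\otimes R(E)$-module $Z/Z_*$ on which $Z$ acts by multiplication and $x\in R(E)$ acts by the scalar $\eta(x)$. A vector $v$ of an $R$-module $V$ is a Whittaker vector (of type $\eta$) if $Ev=\eta(E)v$; $V$ is a Whittaker module of type $\eta$ if $V=Rv$ for some Whittaker vector $v$. $Z_V=\mathrm{Ann}_R(V)\cap Z$. *)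

From HB Require Import structures.
From mathcomp Require Import all_boot all_order all_algebra.
From mathcomp Require Import complex.
From mathcomp Require Import Rstruct.
Set Implicit Arguments. Unset Strict Implicit. Unset Printing Implicit Defensive.
Import Order.TTheory GRing.Theory Num.Theory.
Local Open Scope ring_scope.

Definition C : fieldType := (Rdefinitions.R)[i].

Definition pact (V : lmodType C) (T : V -> V) (p : {poly C}) (v : V) : V :=
  \sum_(i < size p) p`_i *: iter i T v.

(* (V, E, F, H) is a (left) module over R(f) = C<E,F,H>/(relations) *)
Definition is_Rmod (f : {poly C}) (V : lmodType C) (E F H : V -> V) : Prop :=
  [/\ linear E, linear F, linear H &
      forall v : V,
        [/\ E (F v) - F (E v) = pact H f v,
            H (E v) - E (H v) = E v &
            H (F v) - F (H v) = - F v]].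

Definition Omega (u : {poly C}) (V : lmodType C) (E F H : V -> V) (v : V) : V :=
  2%:R *: F (E v) + pact H (u \Po ('X + 1)) v.

Definition zact (u : {poly C}) (V : lmodType C) (E F H : V -> V)
  (p : {poly C}) (v : V) : V := pact (Omega u E F H) p v.

(* V = R v : the smallest R-submodule containing v is V *)
Definition generates (V : lmodType C) (E F H : V -> V) (v : V) : Prop :=
  forall S : V -> Prop,
    S 0 -> (forall x y, S x -> S y -> S (x + y)) ->
    (forall (a : C) x, S x -> S (a *: x)) ->
    (forall x, S x -> [/\ S (E x), S (F x) & S (H x)]) ->
    S v -> forall x, S x.

(* v is a Whittaker vector of type eta (eta stands for eta(E)) *)
Definition whittaker_vector (eta : C) (V : lmodType C) (E : V -> V) (v : V) :=
  E v = eta *: v.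

Definition is_whittaker_module (eta : C) (V : lmodType C) (E F H : V -> V) :=
  exists v : V, whittaker_vector eta E v /\ generates E F H v.

(* Z_V = Ann_R(V) ∩ Z, as a set of polynomials p with p(Omega) = 0 on V *)
Definition ZV (u : {poly C}) (V : lmodType C) (E F H : V -> V) (p : {poly C}) :=
  forall v : V, zact u E F H p v = 0.

(* ideals of Z = C[Omega] (identified with {poly C}) *)
Definition is_ideal (I : {poly C} -> Prop) : Prop :=
  [/\ I 0, (forall p q, I p -> I q -> I (p + q)) & (forall p q, I q -> I (p * q))].

Definition Rhom (V W : lmodType C) (E F H : V -> V) (E' F' H' : W -> W)
  (phi : V -> W) : Prop :=
  [/\ linear phi, forall v, phi (E v) = E' (phi v),
      forall v, phi (F v) = F' (phi v) & forall v, phi (H v) = H' (phi v)].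

(* (V,E,F,H) is isomorphic to R ⊗_{Z⊗R(E)} (Z/I)_eta, expressed through the
   universal property of this induced module: with w the image of 1⊗1,
   Hom_R(V, W) ≅ Hom_{Z⊗R(E)}((Z/I)_eta, W) via phi |-> (1 + I |-> phi w). *)
Definition is_induced (f u : {poly C}) (eta : C) (I : {poly C} -> Prop)
  (V : lmodType C) (E F H : V -> V) : Prop :=
  exists w : V,
    [/\ E w = eta *: w, (forall p, I p -> zact u E F H p w = 0) &
    forall (W : lmodType C) (E' F' H' : W -> W), is_Rmod f E' F' H' ->
      forall w' : W, E' w' = eta *: w' -> (forall p, I p -> zact u E' F' H' p w' = 0) ->
      exists phi : V -> W,
        [/\ Rhom E F H E' F' H' phi, phi w = w' &
           forall psi : V -> W, Rhom E F H E' F' H' psi -> psi w = w' ->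
             forall x, psi x = phi x]].

(* A Whittaker vector w generating V makes every element a sum of terms
   H^i q_i(Omega) w.  On H^i c with E c = eta c, the operator 1 - eta^-1 E acts
   as the backward difference of X^i, which lowers the degree in H; hence such a
   sum vanishes only when every q_i(Omega) w does, i.e. when every q_i lies in
   Z_V.  Relations holding in V therefore hold in every module generated by a
   Whittaker vector killed by Z_V: this is the universal property of
   R (x)_{Z (x) R(E)} (Z/Z_V)_eta.  Conversely, uniqueness in the universal
   property forces the distinguished vector to generate V, and the ideal is Z_V:
   Z = C[Omega] is a principal ideal domain, so for p outside I there is h with
   I contained in (h) and h not dividing p, and on the explicit induced module
   C[H] (x) C[Omega]/(h) the element p(Omega) does not annihilate 1 (x) 1. *)

From HB Require Import structures.
From mathcomp Require Import all_boot all_order all_algebra.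
From mathcomp Require Import complex.
From mathcomp Require Import Rstruct ring.
From Stdlib Require Import Classical ClassicalEpsilon.
Set Implicit Arguments. Unset Strict Implicit. Unset Printing Implicit Defensive.
Import GRing.Theory Num.Theory.
Local Open Scope ring_scope.

Section LinearMaps.
Variables (U W : lmodType C) (T : U -> W).
Hypothesis linT : linear T.
#[local] HB.instance Definition _ := GRing.isLinear.Build C U W *:%R T linT.

Lemma lin0 : T 0 = 0. Proof. exact: linear0. Qed.
Lemma linD x y : T (x + y) = T x + T y. Proof. exact: linearD. Qed.
Lemma linZ a x : T (a *: x) = a *: T x. Proof. exact: linearZ. Qed.
Lemma linN x : T (- x) = - T x. Proof. exact: linearN. Qed.
Lemma linB x y : T (x - y) = T x - T y. Proof. exact: linearB. Qed.
Lemma lin_sum I (r : seq I) (P : pred I) (G : I -> U) :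
  T (\sum_(i <- r | P i) G i) = \sum_(i <- r | P i) T (G i).
Proof. exact: linear_sum. Qed.

End LinearMaps.

Section PolyAction.
Variables (V : lmodType C) (T : V -> V).

Lemma pact_widen (p : {poly C}) n v : (size p <= n)%N ->
  pact T p v = \sum_(i < n) p`_i *: iter i T v.
Proof.
move=> le_p_n; rewrite /pact (big_ord_widen n (fun i => p`_i *: iter i T v) le_p_n).
rewrite big_mkcond; apply: eq_bigr => i _.
by case: ltnP => // /(nth_default 0) ->; rewrite scale0r.
Qed.

Lemma pact0 v : pact T 0 v = 0.
Proof. by rewrite /pact size_poly0 big_ord0. Qed.

Lemma pactD p q v : pact T (p + q) v = pact T p v + pact T q v.
Proof.
rewrite !(@pact_widen _ (maxn (size p) (size q))) ?leq_maxl ?leq_maxr //.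
  by rewrite -big_split; apply: eq_bigr => i _; rewrite coefD scalerDl.
by rewrite (leq_trans (size_polyD _ _)).
Qed.

Lemma pactZ a p v : pact T (a *: p) v = a *: pact T p v.
Proof.
rewrite !(@pact_widen _ (size p)) ?size_scale_leq // scaler_sumr.
by apply: eq_bigr => i _; rewrite coefZ scalerA.
Qed.

Lemma pactN p v : pact T (- p) v = - pact T p v.
Proof. by rewrite -(scaleN1r p) pactZ scaleN1r. Qed.

Lemma pactB p q v : pact T (p - q) v = pact T p v - pact T q v.
Proof. by rewrite pactD pactN. Qed.

Lemma pact_sum I (r : seq I) (P : pred I) (G : I -> {poly C}) v :
  pact T (\sum_(i <- r | P i) G i) v = \sum_(i <- r | P i) pact T (G i) v.
Proof. exact: (big_morph (pact T ^~ v) (fun p q => pactD p q v) (pact0 v)). Qed.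

Lemma pactC c v : pact T c%:P v = c *: v.
Proof. by rewrite (@pact_widen _ 1) ?size_polyC ?leq_b1 // big_ord1 coefC. Qed.

Lemma pact1 v : pact T 1 v = v.
Proof. by rewrite pactC scale1r. Qed.

Lemma pactXn n v : pact T 'X^n v = iter n T v.
Proof.
rewrite /pact size_polyXn big_ord_recr /= coefXn eqxx scale1r big1 ?add0r // => i _.
by rewrite coefXn ltn_eqF ?scale0r.
Qed.

Lemma pactMX p v : pact T (p * 'X) v = pact T p (T v).
Proof.
rewrite (@pact_widen _ (size p).+1); last first.
  by rewrite (leq_trans (size_polyMleq _ _)) // size_polyX addn2.
rewrite big_ord_recl coefMX eqxx scale0r add0r.
by apply: eq_bigr => i _; rewrite coefMX /= -iterSr.
Qed.

End PolyAction.

Section Intertwining.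
Variables (V W : lmodType C) (T : V -> V) (S : W -> W) (A : V -> W).
Hypotheses (linA : linear A) (AT_SA : forall v, A (T v) = S (A v)).

Lemma pact_intertwine p v : A (pact T p v) = pact S p (A v).
Proof.
rewrite /pact (lin_sum linA); apply: eq_bigr => i _; rewrite (linZ linA); congr (_ *: _).
by elim: (nat_of_ord i) => //= n <-; rewrite AT_SA.
Qed.

End Intertwining.

Section LinearPolyAction.
Variables (V : lmodType C) (T : V -> V).
Hypothesis linT : linear T.

Lemma iter_is_linear n : linear (iter n T).
Proof. by elim: n => // n IH a x y /=; rewrite IH linT. Qed.

Lemma pact_is_linear p : linear (pact T p).
Proof.
move=> a x y; rewrite /pact scaler_sumr -big_split; apply: eq_bigr => i _.
by rewrite iter_is_linear scalerDr !scalerA mulrC.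
Qed.

Lemma pact_commute p v : T (pact T p v) = pact T p (T v).
Proof. exact: pact_intertwine. Qed.

Lemma pactM p q v : pact T (p * q) v = pact T p (pact T q v).
Proof.
elim/poly_ind: p q v => [|p c IH] q v; first by rewrite mul0r !pact0.
rewrite mulrDl mulrAC !pactD !pactMX IH pact_commute.
by rewrite !mul_polyC !pactZ pactC.
Qed.

Lemma pactX v : pact T 'X v = T v.
Proof. by rewrite -['X]mul1r pactMX pact1. Qed.

Lemma pact_comp p q v : pact T (p \Po q) v = pact (pact T q) p v.
Proof.
rewrite comp_polyE pact_sum /pact; apply: eq_bigr => i _.
rewrite -/(pact T _ v) pactZ; congr (_ *: _).
by elim: (nat_of_ord i) => [|n IH]; rewrite ?expr0 ?pact1 // exprS pactM IH.
Qed.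

Lemma pact_sum_coef (I : eqType) (r : seq I) (p : I -> {poly C}) (c : I -> V) n :
  (forall i, i \in r -> (size (p i) <= n)%N) ->
  \sum_(i <- r) pact T (p i) (c i) = \sum_(j < n) iter j T (\sum_(i <- r) (p i)`_j *: c i).
Proof.
move=> size_p; rewrite (eq_big_seq _ (fun i ri => pact_widen T (c i) (size_p i ri))).
rewrite exchange_big /=; apply: eq_bigr => j _; rewrite (lin_sum (iter_is_linear j)).
by apply: eq_bigr => i _; rewrite (linZ (iter_is_linear j)).
Qed.

End LinearPolyAction.

Lemma comp_polyXB1_XD1 (R : comNzRingType) (p : {poly R}) :
  p \Po ('X - 1) \Po ('X + 1) = p.
Proof. by have := comp_polyXaddC_K p (-1); rewrite polyCN opprK polyC1. Qed.

Lemma comp_polyXD1_XB1 (R : comNzRingType) (p : {poly R}) :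
  p \Po ('X + 1) \Po ('X - 1) = p.
Proof. by rewrite -polyC1 comp_polyXaddC_K. Qed.

Lemma natrS_neq0 n : (n.+1%:R : C) != 0.
Proof. by rewrite (pnatr_eq0 (Rdefinitions.R)[i]). Qed.

Section RModule.
Variables (f u : {poly C}) (V : lmodType C) (E F H : V -> V).
Hypothesis RmodV : is_Rmod f E F H.

Lemma Rmod_linE : linear E. Proof. by case: RmodV. Qed.
Lemma Rmod_linF : linear F. Proof. by case: RmodV. Qed.
Lemma Rmod_linH : linear H. Proof. by case: RmodV. Qed.
Let linE := Rmod_linE.
Let linF := Rmod_linF.
Let linH := Rmod_linH.

Lemma commEF v : E (F v) = F (E v) + pact H f v.
Proof. by case: RmodV => _ _ _ /(_ v) [<- _ _]; rewrite addrC subrK. Qed.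

Lemma commEH v : E (H v) = H (E v) - E v.
Proof.
by case: RmodV => _ _ _ /(_ v) [_ HE _]; rewrite -[X in _ = _ - X]HE opprB addrC subrK.
Qed.

Lemma commFH v : F (H v) = H (F v) + F v.
Proof.
by case: RmodV => _ _ _ /(_ v) [_ _ HF]; rewrite -[X in _ = _ + X]opprK -HF opprB addrC subrK.
Qed.

Lemma E_pactH q v : E (pact H q v) = pact H (q \Po ('X - 1)) (E v).
Proof.
rewrite (pact_comp linH) (pact_intertwine (S := pact H ('X - 1)) linE) // => w.
by rewrite commEH pactB pactX ?pact1.
Qed.

Lemma F_pactH q v : F (pact H q v) = pact H (q \Po ('X + 1)) (F v).
Proof.
rewrite (pact_comp linH) (pact_intertwine (S := pact H ('X + 1)) linF) // => w.
by rewrite commFH pactD pactX ?pact1.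
Qed.

Local Notation Om := (Omega u E F H).
Local Notation zt := (zact u E F H).

Lemma Omega_is_linear : linear Om.
Proof.
move=> a x y; rewrite /Omega linE linF (pact_is_linear linH).
by rewrite !scalerDr !scalerA mulrC addrACA.
Qed.

Lemma zact_is_linear p : linear (zt p).
Proof. exact: pact_is_linear Omega_is_linear p. Qed.

Lemma commH_Omega v : H (Om v) = Om (H v).
Proof.
rewrite /Omega (linD linH) (linZ linH) (pact_commute linH) commEH (linB linF) commFH.
by rewrite addrK.
Qed.

Hypothesis fu : f = 2%:R^-1 *: (u \Po ('X + 1) - u).

Let two_f : 2%:R *: f = u \Po ('X + 1) - u.
Proof. by rewrite fu scalerA mulfV ?scale1r ?natrS_neq0. Qed.

Lemma commE_Omega v : E (Om v) = Om (E v).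
Proof.
rewrite /Omega (linD linE) (linZ linE) commEF E_pactH comp_polyXD1_XB1 scalerDr -addrA.
by rewrite -pactZ two_f pactB subrK.
Qed.

Lemma commF_Omega v : F (Om v) = Om (F v).
Proof.
rewrite /Omega (linD linF) (linZ linF) commEF F_pactH (linD linF) scalerDr -addrA F_pactH.
by rewrite -pactZ -comp_polyZ two_f comp_polyB pactB subrK.
Qed.

Lemma commE_zact p v : E (zt p v) = zt p (E v).
Proof. exact: pact_intertwine commE_Omega p v. Qed.

Lemma commF_zact p v : F (zt p v) = zt p (F v).
Proof. exact: pact_intertwine commF_Omega p v. Qed.

Lemma commH_zact p v : H (zt p v) = zt p (H v).
Proof. exact: pact_intertwine commH_Omega p v. Qed.

End RModule.

Lemma ZV_ideal (f u : {poly C}) (V : lmodType C) (E F H : V -> V) :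
  is_Rmod f E F H -> is_ideal (ZV u E F H).
Proof.
move=> RmodV; have linOm := Omega_is_linear u RmodV.
split=> [v | p q ZVp ZVq v | p q ZVq v]; rewrite /zact.
- exact: pact0.
- by rewrite pactD [pact _ p v]ZVp [pact _ q v]ZVq addr0.
- by rewrite (pactM linOm) [pact _ q v]ZVq (lin0 (pact_is_linear linOm p)).
Qed.

Section BackwardDifference.
Variable R : idomainType.
Implicit Types (p q : {poly R}).

Definition bdiff q := q - (q \Po ('X - 1)).

Lemma size_MXaddC_leq q c n : (size (q * 'X + c%:P)%R <= n.+1)%N -> (size q <= n)%N.
Proof. by rewrite size_MXaddC; case: ifP => [/andP[/eqP -> _]|]; rewrite ?size_poly0. Qed.

Lemma bdiff_MXaddC q c : bdiff (q * 'X + c%:P) = bdiff q * 'X + (q \Po ('X - 1)).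
Proof.
rewrite /bdiff comp_poly_MXaddC; ring.
Qed.

Lemma size_comp_XB1 q : size (q \Po ('X - 1)) = size q.
Proof. by rewrite size_comp_poly2 // -polyC1 size_XsubC. Qed.

Lemma coef_comp_XB1_top q n : (size q <= n.+1)%N -> (q \Po ('X - 1))`_n = q`_n.
Proof.
elim/poly_ind: q n => [|q c IH] n size_q; first by rewrite comp_poly0.
have {}size_q := size_MXaddC_leq size_q.
rewrite comp_poly_MXaddC mulrBr mulr1 !coefD coefN !coefMX !coefC.
case: n size_q => [|n] size_q /=.
  by move: size_q; rewrite leqn0 size_poly_eq0 => /eqP ->; rewrite comp_poly0 coef0 subr0.
by rewrite IH // [X in _ - X]nth_default ?size_comp_XB1 // subr0 addr0.
Qed.

Lemma size_bdiff q n : (size q <= n.+1)%N -> (size (bdiff q) <= n)%N.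
Proof.
elim/poly_ind: q n => [|q c IH] n size_q; first by rewrite /bdiff comp_poly0 subr0 size_poly0.
have {}size_q := size_MXaddC_leq size_q; rewrite bdiff_MXaddC.
case: n size_q => [|n] size_q.
  move: size_q; rewrite leqn0 size_poly_eq0 => /eqP ->.
  by rewrite /bdiff comp_poly0 !(subr0, mul0r, add0r) size_poly0.
rewrite (leq_trans (size_polyD _ _)) // geq_max size_comp_XB1 size_q andbT.
by rewrite (leq_trans (size_polyMleq _ _)) // size_polyX addn2 ltnS IH.
Qed.

Lemma coef_bdiff_top q n : (size q <= n.+2)%N -> (bdiff q)`_n = n.+1%:R * q`_n.+1.
Proof.
elim/poly_ind: q n => [|q c IH] n size_q; first by rewrite /bdiff comp_poly0 subr0 !coef0 mulr0.
have {}size_q := size_MXaddC_leq size_q.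
rewrite bdiff_MXaddC coefD coefMX coef_comp_XB1_top // (coefD (q * 'X)) coefMX coefC /= addr0.
case: n size_q => [|n] size_q /=; first by rewrite add0r mul1r.
by rewrite IH ?(leq_trans size_q) // -[in RHS]natr1 mulrDl mul1r.
Qed.

End BackwardDifference.

Section WhittakerIndependence.
Variables (f : {poly C}) (V : lmodType C) (E F H : V -> V).
Hypothesis RmodV : is_Rmod f E F H.
Variable eta : C.
Hypothesis eta_neq0 : eta != 0.

Let linE := Rmod_linE RmodV.
Let linH := Rmod_linH RmodV.

Local Notation whittaker := (whittaker_vector eta E).

Lemma whittaker_lincomb (I : Type) (r : seq I) (a : I -> C) (c : I -> V) :
  (forall i, whittaker (c i)) -> whittaker (\sum_(i <- r) a i *: c i).
Proof.
move=> wc; rewrite /whittaker_vector (lin_sum linE) scaler_sumr.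
by apply: eq_bigr => i _; rewrite (linZ linE) wc !scalerA mulrC.
Qed.

Lemma bdiff_pact_whittaker q v : whittaker v ->
  pact H q v - eta^-1 *: E (pact H q v) = pact H (bdiff q) v.
Proof.
move=> wv; rewrite (E_pactH RmodV) wv (linZ (pact_is_linear linH _)) scalerA mulVf // scale1r.
by rewrite /bdiff pactB.
Qed.

(* 1 - eta^-1 E sends H^k c to (bdiff 'X^k)(H) c, whose degree is k - 1 with
   leading coefficient k: the top vector is killed first, then induct. *)
Lemma whittaker_free n (c : nat -> V) : (forall i, whittaker (c i)) ->
  \sum_(i < n) iter i H (c i) = 0 -> forall i, (i < n)%N -> c i = 0.
Proof.
elim: n c => [//|n IH] c wc sum0.
suff cn0 : c n = 0.
  have sumn0 : \sum_(i < n) iter i H (c i) = 0.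
    by move: sum0; rewrite big_ord_recr /= cn0 (lin0 (iter_is_linear linH n)) addr0.
  by move=> i; rewrite ltnS leq_eqVlt => /orP[/eqP -> // | /IH]; apply.
case: n IH sum0 => [|n] IH sum0; first by rewrite big_ord1 in sum0.
pose c' j := \sum_(k < n.+2) (bdiff 'X^k)`_j *: c k.
have wc' j : whittaker (c' j) by exact: whittaker_lincomb.
have sum'0 : \sum_(j < n.+1) iter j H (c' j) = 0.
  rewrite -(pact_sum_coef linH) => [|k _]; last by rewrite size_bdiff ?size_polyXn.
  under eq_bigr do rewrite -bdiff_pact_whittaker // pactXn.
  by rewrite big_split /= sumrN -scaler_sumr -(lin_sum linE) sum0 (lin0 linE) scaler0 subr0.
have := IH c' wc' sum'0 n (ltnSn n); rewrite /c' big_ord_recr /= big1 => [|k _].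
  rewrite add0r coef_bdiff_top ?size_polyXn // coefXn eqxx mulr1 => /eqP.
  by rewrite scaler_eq0 (negbTE (natrS_neq0 n)) => /eqP.
by rewrite nth_default ?scale0r // (leq_trans (@size_bdiff _ 'X^k k _)) ?size_polyXn // -ltnS.
Qed.

End WhittakerIndependence.

Inductive rterm := RGen | RE of rterm | RF of rterm | RH of rterm
  | RAdd of rterm & rterm | RScale of C & rterm.

Fixpoint reval (V : lmodType C) (E F H : V -> V) (w : V) (t : rterm) : V :=
  match t with
  | RGen => w
  | RE t => E (reval E F H w t)
  | RF t => F (reval E F H w t)
  | RH t => H (reval E F H w t)
  | RAdd t s => reval E F H w t + reval E F H w s
  | RScale a t => a *: reval E F H w t
  end.

(* A pair (p, q) stands for p(H) q(Omega) w; the clause for F comes from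
   [F_whittaker] below. *)
Definition nfF (u : {poly C}) (eta : C) (x : {poly C} * {poly C}) :=
  [:: ((2%:R * eta)^-1 *: (x.1 \Po ('X + 1)), x.2 * 'X);
      (- (2%:R * eta)^-1 *: ((x.1 \Po ('X + 1)) * (u \Po ('X + 1))), x.2)].

Fixpoint rnf (u : {poly C}) (eta : C) (t : rterm) : seq ({poly C} * {poly C}) :=
  match t with
  | RGen => [:: (1, 1)]
  | RE t => [seq (eta *: (x.1 \Po ('X - 1)), x.2) | x <- rnf u eta t]
  | RF t => flatten [seq nfF u eta x | x <- rnf u eta t]
  | RH t => [seq ('X * x.1, x.2) | x <- rnf u eta t]
  | RAdd t s => rnf u eta t ++ rnf u eta s
  | RScale a t => [seq (a *: x.1, x.2) | x <- rnf u eta t]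
  end.

Definition nf_size (N : seq ({poly C} * {poly C})) := \max_(x <- N) size x.1.

Definition nf_coef (N : seq ({poly C} * {poly C})) j := \sum_(x <- N) x.1`_j *: x.2.

Section NormalForm.
Variables (f u : {poly C}) (V : lmodType C) (E F H : V -> V).
Hypotheses (RmodV : is_Rmod f E F H) (fu : f = 2%:R^-1 *: (u \Po ('X + 1) - u)).
Variables (eta : C) (w : V).
Hypotheses (eta_neq0 : eta != 0) (wv : whittaker_vector eta E w).

Let linE := Rmod_linE RmodV.
Let linF := Rmod_linF RmodV.
Let linH := Rmod_linH RmodV.
Let linZt := zact_is_linear u RmodV.
Local Notation Om := (Omega u E F H).
Local Notation zt := (zact u E F H).

Lemma F_whittaker : F w = (2%:R * eta)^-1 *: (Om w - pact H (u \Po ('X + 1)) w).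
Proof.
rewrite /Omega wv (linZ linF) addrK !scalerA mulVf ?scale1r //.
by rewrite mulf_neq0 ?natrS_neq0.
Qed.

Lemma reval_nf t : reval E F H w t = \sum_(x <- rnf u eta t) pact H x.1 (zt x.2 w).
Proof.
elim: t => [|t IH|t IH|t IH|t IHt s IHs|a t IH] /=.
- by rewrite big_seq1 /zact !pact1.
- rewrite big_map IH (lin_sum linE); apply: eq_bigr => x _.
  rewrite (E_pactH RmodV) (commE_zact RmodV fu) wv (linZ (linZt _)).
  by rewrite (linZ (pact_is_linear linH _)) pactZ.
- rewrite big_flatten big_map IH (lin_sum linF) /=; apply: eq_bigr => x _.
  rewrite big_cons big_seq1 /= (F_pactH RmodV) (commF_zact RmodV fu) F_whittaker.
  rewrite (linZ (linZt _)) (linB (linZt _)) [zt x.2 (Om w)]/zact -pactMX.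
  rewrite (pact_intertwine (linZt _) (fun v => esym (commH_zact u RmodV _ v))).
  rewrite (linZ (pact_is_linear linH _)) (linB (pact_is_linear linH _)) -(pactM linH).
  by rewrite !pactZ scalerBr scaleNr.
- rewrite big_map IH (lin_sum linH); apply: eq_bigr => x _.
  by rewrite (pactM linH) pactX.
- by rewrite big_cat IHt IHs.
- by rewrite big_map IH scaler_sumr; apply: eq_bigr => x _; rewrite pactZ.
Qed.

Lemma reval_nf_coef t (N := rnf u eta t) :
  reval E F H w t = \sum_(j < nf_size N) iter j H (zt (nf_coef N j) w).
Proof.
rewrite reval_nf (@pact_sum_coef _ _ linH _ _ _ _ (nf_size N)); last first.
  by move=> x x_in; exact: leq_bigmax_seq.
apply: eq_bigr => j _; rewrite /nf_coef [zt _ w]/zact pact_sum.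
by congr (iter _ _ _); apply: eq_bigr => x _; rewrite pactZ.
Qed.

End NormalForm.

Lemma Rhom_reval (V W : lmodType C) (E F H : V -> V) (E' F' H' : W -> W) (phi : V -> W) w :
  Rhom E F H E' F' H' phi -> forall t, phi (reval E F H w t) = reval E' F' H' (phi w) t.
Proof.
case=> linphi phiE phiF phiH; elim=> [|t IH|t IH|t IH|t IHt s IHs|a t IH] //=.
- by rewrite phiE IH.
- by rewrite phiF IH.
- by rewrite phiH IH.
- by rewrite (linD linphi) IHt IHs.
- by rewrite (linZ linphi) IH.
Qed.

Lemma Rhom_zact (u : {poly C}) (V W : lmodType C) (E F H : V -> V) (E' F' H' : W -> W)
  (phi : V -> W) : Rhom E F H E' F' H' phi ->
  forall p v, phi (zact u E F H p v) = zact u E' F' H' p (phi v).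
Proof.
case=> linphi phiE phiF phiH p v; apply: (pact_intertwine linphi) => {p}v.
rewrite /Omega (linD linphi) (linZ linphi) phiF phiE; congr (_ + _).
exact: pact_intertwine.
Qed.

Section WhittakerModule.
Variables (f u : {poly C}) (V : lmodType C) (E F H : V -> V).
Hypotheses (RmodV : is_Rmod f E F H) (fu : f = 2%:R^-1 *: (u \Po ('X + 1) - u)).
Variables (eta : C) (w : V).
Hypotheses (eta_neq0 : eta != 0) (wv : whittaker_vector eta E w).
Hypothesis gen : generates E F H w.

Local Notation zt := (zact u E F H).
Local Notation ev := (reval E F H w).

Lemma ZV_of_generator r : zt r w = 0 -> ZV u E F H r.
Proof.
move=> r0; apply: gen => [||a x|x|//].
- exact: lin0 (zact_is_linear u RmodV r).
- by move=> x y x0 y0; rewrite (linD (zact_is_linear u RmodV r)) x0 y0 addr0.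
- by move=> x0; rewrite (linZ (zact_is_linear u RmodV r)) x0 scaler0.
- move=> x0; rewrite -(commE_zact RmodV fu) -(commF_zact RmodV fu) -(commH_zact u RmodV) x0.
  by rewrite (lin0 (Rmod_linE RmodV)) (lin0 (Rmod_linF RmodV)) (lin0 (Rmod_linH RmodV)).
Qed.

Lemma reval_surj x : exists t, ev t = x.
Proof.
apply: (gen (S := fun x => exists t, ev t = x)).
- by exists (RScale 0 RGen); rewrite /= scale0r.
- by move=> _ _ [t <-] [s <-]; exists (RAdd t s).
- by move=> a _ [t <-]; exists (RScale a t).
- by move=> _ [t <-]; split; [exists (RE t) | exists (RF t) | exists (RH t)].
- by exists RGen.
Qed.

Definition rterm_of x := projT1 (constructive_indefinite_description _ (reval_surj x)).

Lemma rterm_ofK x : ev (rterm_of x) = x.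
Proof. exact: projT2 (constructive_indefinite_description _ (reval_surj x)). Qed.

Section Target.
Variables (W : lmodType C) (E' F' H' : W -> W) (w' : W).
Hypotheses (RmodW : is_Rmod f E' F' H') (wv' : whittaker_vector eta E' w').
Hypothesis ann_w' : forall p, ZV u E F H p -> zact u E' F' H' p w' = 0.

Local Notation ev' := (reval E' F' H' w').

Lemma reval_transfer0 t : ev t = 0 -> ev' t = 0.
Proof.
move=> t0; set N := rnf u eta t.
have zt0 j : (j < nf_size N)%N -> zt (nf_coef N j) w = 0.
  apply: (whittaker_free RmodV eta_neq0 (c := fun j => zt (nf_coef N j) w)) => [i|].
    by rewrite /whittaker_vector (commE_zact RmodV fu) wv (linZ (zact_is_linear u RmodV _)).
  by rewrite -(reval_nf_coef RmodV fu eta_neq0 wv).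
rewrite (reval_nf_coef RmodW fu eta_neq0 wv') big1 // => j _.
by rewrite ann_w' ?(lin0 (iter_is_linear (Rmod_linH RmodW) _)) //; apply/ZV_of_generator/zt0.
Qed.

Lemma reval_transfer t s : ev t = ev s -> ev' t = ev' s.
Proof.
move=> ts; apply/eqP; rewrite -subr_eq0 -scaleN1r; apply/eqP.
by apply: (reval_transfer0 (t := RAdd t (RScale (-1) s))); rewrite /= ts scaleN1r subrr.
Qed.

Definition induced_map x := ev' (rterm_of x).

Lemma induced_map_reval t : induced_map (ev t) = ev' t.
Proof. exact: reval_transfer (rterm_ofK _). Qed.

Lemma induced_map_Rhom : Rhom E F H E' F' H' induced_map.
Proof.
split=> [a x y|x|x|x].
- rewrite -[x]rterm_ofK -[y]rterm_ofK.
  by rewrite -[_ + _]/(ev (RAdd (RScale a _) _)) !induced_map_reval.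
- by rewrite -[x]rterm_ofK -[E _]/(ev (RE _)) !induced_map_reval.
- by rewrite -[x]rterm_ofK -[F _]/(ev (RF _)) !induced_map_reval.
- by rewrite -[x]rterm_ofK -[H _]/(ev (RH _)) !induced_map_reval.
Qed.

Lemma induced_map_generator : induced_map w = w'.
Proof. exact: induced_map_reval RGen. Qed.

Lemma induced_map_unique psi : Rhom E F H E' F' H' psi -> psi w = w' ->
  forall x, psi x = induced_map x.
Proof.
move=> psi_hom psi_w x.
by rewrite -[x]rterm_ofK (Rhom_reval _ psi_hom) psi_w induced_map_reval.
Qed.

End Target.

Lemma whittaker_is_induced : is_induced f u eta (ZV u E F H) E F H.
Proof.
exists w; split=> // W E' F' H' RmodW w' wv' ann_w'.
exists (induced_map E' F' H' w'); split.
- exact: induced_map_Rhom.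
- exact: induced_map_generator.
- exact: induced_map_unique.
Qed.

End WhittakerModule.

Section GeneratedSubmodule.
Variables (V : lmodType C) (E F H : V -> V) (w : V).

Definition in_generated (x : V) : Prop :=
  forall S : V -> Prop,
    S 0 -> (forall x y, S x -> S y -> S (x + y)) ->
    (forall (a : C) x, S x -> S (a *: x)) ->
    (forall x, S x -> [/\ S (E x), S (F x) & S (H x)]) ->
    S w -> S x.

Lemma generatesP : (forall x, in_generated x) -> generates E F H w.
Proof. by move=> all_gen S S0 SD SZ Sops Sw x; apply: all_gen. Qed.

Definition generatedb x : bool := excluded_middle_informative (in_generated x).

Lemma generatedbP x : reflect (in_generated x) (generatedb x).
Proof. exact: sumboolP. Qed.

Fact generatedb_submod_closed : GRing.submod_closed generatedb.
Proof.
split=> [|a x y /generatedbP x_gen /generatedbP y_gen]; apply/generatedbP => S S0 SD SZ Sops Sw //.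
exact: SD _ _ (SZ _ _ (x_gen S S0 SD SZ Sops Sw)) (y_gen S S0 SD SZ Sops Sw).
Qed.
HB.instance Definition _ := GRing.isSubmodClosed.Build C V generatedb generatedb_submod_closed.

Inductive generated : predArgType := Generated x of x \in generatedb.
Definition gval (x : generated) : V := let: Generated y _ := x in y.
HB.instance Definition _ := [isSub of generated for gval].
HB.instance Definition _ := [Choice of generated by <:].
HB.instance Definition _ := [SubChoice_isSubZmodule of generated by <:].
HB.instance Definition _ := [SubZmodule_isSubLmodule of generated by <:].

Lemma gval_is_linear : linear gval. Proof. by []. Qed.

Lemma in_generated_ops x : in_generated x ->
  [/\ in_generated (E x), in_generated (F x) & in_generated (H x)].
Proof.
move=> x_gen; split=> S S0 SD SZ Sops Sw;
  by have [] := Sops _ (x_gen S S0 SD SZ Sops Sw).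
Qed.

Fact gE_subproof y : E (gval y) \in generatedb.
Proof. by case: y => x /= /generatedbP /in_generated_ops[? _ _]; apply/generatedbP. Qed.
Fact gF_subproof y : F (gval y) \in generatedb.
Proof. by case: y => x /= /generatedbP /in_generated_ops[_ ? _]; apply/generatedbP. Qed.
Fact gH_subproof y : H (gval y) \in generatedb.
Proof. by case: y => x /= /generatedbP /in_generated_ops[_ _ ?]; apply/generatedbP. Qed.

Definition gE y := Generated (gE_subproof y).
Definition gF y := Generated (gF_subproof y).
Definition gH y := Generated (gH_subproof y).

Fact generator_subproof : w \in generatedb. Proof. by apply/generatedbP => S. Qed.
Definition ggen := Generated generator_subproof.

Lemma gval_pact (T : V -> V) (gT : generated -> generated) :
  (forall y, gval (gT y) = T (gval y)) -> forall p y, gval (pact gT p y) = pact T p (gval y).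
Proof. exact: pact_intertwine gval_is_linear. Qed.

Lemma generated_linear (O : V -> V) (gO : generated -> generated) :
  (forall y, gval (gO y) = O (gval y)) -> linear O -> linear gO.
Proof. by move=> gOE linO a x y; apply: val_inj; rewrite /= gOE gval_is_linear linO -!gOE. Qed.

Variable f : {poly C}.
Hypothesis RmodV : is_Rmod f E F H.

Lemma generated_Rmod : is_Rmod f gE gF gH.
Proof.
have [linE linF linH rels] := RmodV.
split; [exact: generated_linear linE | exact: generated_linear linF |
        exact: generated_linear linH | move=> y].
have [relEF relHE relHF] := rels (gval y).
split; apply: val_inj; rewrite /= ?(linB gval_is_linear) ?(linN gval_is_linear) //=.
by rewrite (gval_pact (T := H)).
Qed.

Lemma gval_zact u p y : gval (zact u gE gF gH p y) = zact u E F H p (gval y).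
Proof.
apply: gval_pact => {}y.
by rewrite /Omega (linD gval_is_linear) (linZ gval_is_linear) (gval_pact (T := H)).
Qed.

End GeneratedSubmodule.

Arguments gval {V E F H w}.

Section Ideals.
Variable I : {poly C} -> Prop.
Hypothesis idealI : is_ideal I.

Lemma ideal0 : I 0. Proof. by case: idealI. Qed.
Lemma idealD p q : I p -> I q -> I (p + q). Proof. by case: idealI => _ + _; apply. Qed.
Lemma idealMl p q : I q -> I (p * q). Proof. by case: idealI => _ _; apply. Qed.
Lemma idealB p q : I p -> I q -> I (p - q).
Proof. by move=> Ip Iq; rewrite -mulN1r; apply/idealD/idealMl. Qed.

Lemma ideal_principal : exists g, forall q, I q <-> g %| q.
Proof.
case: (classic (exists q, I q /\ q != 0)) => [[q0 [Iq0 q0_neq0]] | all0]; last first.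
  exists 0 => q; rewrite dvd0p; split=> [Iq | /eqP ->]; last exact: ideal0.
  by apply/negPn/negP => q_neq0; apply: all0; exists q.
pose P n : bool := excluded_middle_informative (exists2 q, I q /\ q != 0 & size q = n).
have [|n /sumboolP [g [Ig g_neq0] <-] g_min] := ex_minnP (P := P).
  by exists (size q0); apply/sumboolP; exists q0.
exists g => q; split=> [Iq | /dvdpP [r ->]]; last exact: idealMl.
rewrite /dvdp; apply/negPn/negP => mod_neq0.
have Imod : I (q %% g).
  have -> : q %% g = q - q %/ g * g by rewrite {2}(divp_eq q g) addrAC subrr add0r.
  exact/idealB/idealMl.
suff /g_min : P (size (q %% g)) by rewrite leqNgt ltn_modpN0.
by apply/sumboolP; exists (q %% g).
Qed.

Lemma ideal_separation p : ~ I p -> exists h : {poly C},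
  [/\ h \is monic, (1 < size h)%N, forall q, I q -> h %| q & ~~ (h %| p)].
Proof.
move=> notIp; have [g Ig] := ideal_principal.
have g_ndvd_p : ~~ (g %| p) by apply/negP => /Ig.
have [g0 | g_neq0] := eqVneq g 0.
  have p_neq0 : p != 0 by rewrite -dvd0p -g0.
  exists 'X^(size p); split.
  - exact: monicXn.
  - by rewrite size_polyXn ltnS size_poly_gt0.
  - by move=> q /Ig; rewrite g0 dvd0p => /eqP ->; rewrite dvdp0.
  - by apply/negP => /(dvdp_leq p_neq0); rewrite size_polyXn ltnn.
have lc_neq0 : lead_coef g != 0 by rewrite lead_coef_eq0.
exists ((lead_coef g)^-1 *: g); split.
- by rewrite monicE lead_coefZ mulVf.
- rewrite size_scale ?invr_eq0 // ltnNge; apply/negP => /size1_polyC g_const.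
  move: g_neq0 g_ndvd_p; rewrite g_const polyC_eq0 => c_neq0.
  by rewrite -alg_polyC dvdpZl // dvd1p.
- by move=> q /Ig; rewrite dvdpZl ?invr_eq0.
- by rewrite dvdpZl ?invr_eq0.
Qed.

End Ideals.

(* The induced module R (x) (C[Omega]/(h))_eta, realised as polynomials in H
   with coefficients in {poly %/ h}, 'qX playing Omega and 1 playing 1 (x) 1.
   The formula for F is forced by F w = (2 eta)^-1 (Omega - u(H + 1)) w. *)
Section TestModule.
Variable h : {poly C}.
Local Notation A := {poly %/ h}.

Definition testmod : Type := {poly A}.
HB.instance Definition _ := GRing.Zmodule.on testmod.

Definition test_scale (c : C) (P : testmod) : testmod := (c%:A : A)%:P * (P : {poly A}).

Fact test_scaleA a b P : test_scale a (test_scale b P) = test_scale (a * b) P.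
Proof. by rewrite /test_scale mulrA -polyCM -scalerAl mul1r scalerA. Qed.
Fact test_scale1 : left_id 1 test_scale.
Proof. by move=> P; rewrite /test_scale scale1r polyC1 mul1r. Qed.
Fact test_scaleDr : right_distributive test_scale +%R.
Proof. by move=> a P Q; rewrite /test_scale mulrDr. Qed.
Fact test_scaleDl P : {morph test_scale^~ P : a b / a + b}.
Proof. by move=> a b; rewrite /test_scale scalerDl polyCD mulrDl. Qed.
HB.instance Definition _ :=
  GRing.Zmodule_isLmodule.Build C testmod test_scaleA test_scale1 test_scaleDr test_scaleDl.

Lemma test_scaleE (c : C) (P : testmod) : c *: P = (c%:A : A)%:P * (P : {poly A}).
Proof. by []. Qed.

Variables (u : {poly C}) (eta : C).
Local Notation "p ^A" := (map_poly (in_alg A) p) (at level 2, format "p ^A").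
Local Notation shift := ('X + 1 : {poly A}).
Local Notation unshift := ('X - 1 : {poly A}).

Definition testH (P : testmod) : testmod := 'X * (P : {poly A}).
Definition testE (P : testmod) : testmod := (eta%:A : A)%:P * ((P : {poly A}) \Po unshift).
Definition testF (P : testmod) : testmod :=
  (((2%:R * eta)^-1)%:A : A)%:P * (((P : {poly A}) \Po shift) * (('qX)%:P - (u^A \Po shift))).

Lemma pact_testH q P : pact testH q P = q^A * (P : {poly A}).
Proof.
elim/poly_ind: q P => [|q c IH] P; first by rewrite pact0 rmorph0 mul0r.
rewrite pactD pactMX pactC IH test_scaleE /testH rmorphD rmorphM /= map_polyX map_polyC /=.
by rewrite mulrDl mulrA.
Qed.

Lemma testH_linear : linear testH.
Proof. by move=> a P Q; rewrite /testH !test_scaleE mulrDr mulrCA. Qed.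

Lemma testE_linear : linear testE.
Proof.
move=> a P Q; rewrite /testE !test_scaleE comp_polyD comp_polyM comp_polyC.
by rewrite mulrDr mulrCA.
Qed.

Lemma testF_linear : linear testF.
Proof.
move=> a P Q; rewrite /testF !test_scaleE comp_polyD comp_polyM comp_polyC.
by rewrite !mulrDl mulrDr -!mulrA mulrCA.
Qed.

Hypothesis eta_neq0 : eta != 0.
Variable f : {poly C}.
Hypothesis fu : f = 2%:R^-1 *: (u \Po ('X + 1) - u).

Let inalgM (a b : C) : ((a * b)%:A : A) = a%:A * b%:A.
Proof. by rewrite -scalerAl mul1r scalerA. Qed.

Let map_shift : ('X + 1)^A = shift.
Proof. by rewrite rmorphD /= map_polyX rmorph1. Qed.

Lemma map_f_testmod : f^A = ((2%:R^-1 : C)%:A : A)%:P * (u^A \Po shift - u^A).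
Proof. by rewrite fu -mul_polyC rmorphM rmorphB /= map_polyC map_comp_poly map_shift. Qed.

Lemma test_Rmod : is_Rmod f testE testF testH.
Proof.
split; [exact: testE_linear | exact: testF_linear | exact: testH_linear | move=> P].
have eta2_inv : (eta%:A : A)%:P * (((2%:R * eta)^-1)%:A : A)%:P = ((2%:R^-1 : C)%:A : A)%:P.
  by rewrite -polyCM -inalgM invfM mulrCA mulfV // mulr1.
split; rewrite /testE /testF /testH.
- rewrite pact_testH map_f_testmod -eta2_inv !comp_polyM !comp_polyC !comp_polyB.
  rewrite !comp_polyXB1_XD1 !comp_polyXD1_XB1 !comp_polyC.
  have ring_id (e c Q x U U' : {poly A}) :
    e * (c * (Q * (x - U))) - c * (e * Q * (x - U')) = e * c * (U' - U) * Q by ring.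
  exact: ring_id.
- rewrite comp_polyM comp_polyX.
  have ring_id (e Q : {poly A}) : 'X * (e * Q) - e * (('X - 1) * Q) = e * Q by ring.
  exact: ring_id.
- rewrite comp_polyM comp_polyX.
  have ring_id (c Q K : {poly A}) : 'X * (c * (Q * K)) - c * (('X + 1) * Q * K) = - (c * (Q * K)).
    by ring.
  exact: ring_id.
Qed.

Lemma Omega_testmod P : Omega u testE testF testH P = ('qX)%:P * (P : {poly A}).
Proof.
rewrite /Omega pact_testH test_scaleE /testE /testF comp_polyM comp_polyC comp_polyXB1_XD1.
rewrite map_comp_poly map_shift.
have two_eta : ((2%:R : C)%:A : A)%:P * (((2%:R * eta)^-1)%:A : A)%:P * (eta%:A : A)%:P = 1.
  by rewrite -!polyCM -!inalgM invfM mulrA mulfV ?natrS_neq0 // mul1r mulVf // scale1r polyC1.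
have ring_id (d c e Q x U : {poly A}) :
    d * c * e = 1 -> d * (c * (e * Q * (x - U))) + U * Q = x * Q.
  move=> dce1; transitivity (d * c * e * Q * (x - U) + U * Q); first by ring.
  by rewrite dce1 mul1r; ring.
exact: ring_id.
Qed.

Lemma zact_testmod q P : zact u testE testF testH q P = (in_qpoly h q)%:P * (P : {poly A}).
Proof.
rewrite /zact; elim/poly_ind: q P => [|q c IH] P; first by rewrite pact0 in_qpoly0 mul0r.
have in_qpolyC (a : C) : in_qpoly h a%:P = a%:A by rewrite -alg_polyC in_qpolyZ in_qpoly1.
rewrite pactD pactMX pactC IH Omega_testmod test_scaleE in_qpolyD in_qpolyM in_qpolyC.
by rewrite polyCD polyCM mulrA -mulrDl.
Qed.

Lemma zact_testmod1 q : zact u testE testF testH q (1 : {poly A}) = (in_qpoly h q)%:P.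
Proof. by rewrite zact_testmod mulr1. Qed.

Lemma testE_whittaker : whittaker_vector eta testE (1 : {poly A}).
Proof. by rewrite /whittaker_vector /testE test_scaleE -polyC1 comp_polyC. Qed.

End TestModule.

Lemma in_qpoly_eq0 (h q : {poly C}) : h \is monic -> (1 < size h)%N ->
  (in_qpoly h q == 0) = (h %| q).
Proof.
move=> h_monic h_size; have mk_h : mk_monic h = h by rewrite /mk_monic h_size h_monic.
apply/idP/idP => [/eqP/(congr1 val) /= | /dvdpP [k ->]].
  rewrite mk_h => q_mod0; have := Pdiv.RingMonic.rdivp_eq h_monic q.
  by rewrite q_mod0 addr0 => ->; rewrite dvdp_mull.
rewrite in_qpolyM; have -> : in_qpoly h h = 0.
  by apply: val_inj; rewrite /= mk_h Pdiv.RingMonic.rmodpp.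
by rewrite mulr0.
Qed.

Section InducedModule.
Variables (f u : {poly C}) (eta : C) (I : {poly C} -> Prop).
Variables (V : lmodType C) (E F H : V -> V) (w : V).
Hypotheses (RmodV : is_Rmod f E F H) (wv : E w = eta *: w).
Hypothesis ann_w : forall p, I p -> zact u E F H p w = 0.
Hypothesis univ : forall (W : lmodType C) (E' F' H' : W -> W), is_Rmod f E' F' H' ->
  forall w' : W, E' w' = eta *: w' -> (forall p, I p -> zact u E' F' H' p w' = 0) ->
  exists phi : V -> W,
    [/\ Rhom E F H E' F' H' phi, phi w = w' &
       forall psi : V -> W, Rhom E F H E' F' H' psi -> psi w = w' ->
         forall x, psi x = phi x].

(* Both the identity and the map V -> Rw -> V lifting w are endomorphisms fixing
   w, hence equal by uniqueness, so every vector lies in Rw. *)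
Lemma induced_generates : generates E F H w.
Proof.
pose gw := ggen E F H w.
have gwv : gE gw = eta *: gw by apply: val_inj; rewrite /= wv.
have gann p : I p -> zact u (@gE _ E F H w) (@gF _ E F H w) (@gH _ E F H w) p gw = 0.
  by move=> Ip; apply: val_inj; rewrite -[val _]/(gval _) gval_zact ann_w.
have [phi1 [[lin1 phi1E phi1F phi1H] phi1w _]] := univ (generated_Rmod w RmodV) gwv gann.
have [phi0 [_ _ uniq0]] := univ RmodV wv ann_w.
have idE : forall x, x = phi0 x by apply: (uniq0 id).
have hom1 : Rhom E F H E F H (gval \o phi1).
  split=> [a y z|y|y|y] /=; rewrite ?lin1 ?phi1E ?phi1F ?phi1H //.
have gval_phi1E : forall x, gval (phi1 x) = phi0 x.
  by apply: (uniq0 _ hom1); rewrite /= phi1w.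
apply: generatesP => x; rewrite (idE x) -gval_phi1E.
by case: (phi1 x) => y /= /generatedbP.
Qed.

Hypotheses (idealI : is_ideal I) (eta_neq0 : eta != 0).
Hypothesis fu : f = 2%:R^-1 *: (u \Po ('X + 1) - u).

Lemma induced_ideal_ZV p : I p <-> ZV u E F H p.
Proof.
split=> [Ip | ZVp]; first exact: (ZV_of_generator RmodV fu induced_generates (ann_w Ip)).
apply: NNPP => notIp; have [h [h_monic h_size h_dvd h_ndvd]] := ideal_separation idealI notIp.
have in_qpoly0 q : I q -> in_qpoly h q = 0 by move=> /h_dvd; rewrite -in_qpoly_eq0 // => /eqP.
have [|phi [phi_hom phi_w _]] := univ (test_Rmod h eta_neq0 fu) (testE_whittaker h eta).
  by move=> q /in_qpoly0; rewrite (zact_testmod1 h u eta_neq0) => ->.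
have [linphi _ _ _] := phi_hom.
have := Rhom_zact u phi_hom p w; rewrite ZVp phi_w (lin0 linphi) (zact_testmod1 h u eta_neq0).
by move=> /esym/eqP; rewrite polyC_eq0 in_qpoly_eq0 // (negbTE h_ndvd).
Qed.

End InducedModule.

Theorem mainTheorem3 (f u : {poly C})
  (hu : f = 2%:R^-1 *: (u \Po ('X + 1) - u))
  (eta : C) (heta : eta != 0)
  (V : lmodType C) (E F H : V -> V) (hV : is_Rmod f E F H) :
  (is_whittaker_module eta E F H <->
     exists I : {poly C} -> Prop, is_ideal I /\ is_induced f u eta I E F H)
  /\ (forall I : {poly C} -> Prop, is_ideal I -> is_induced f u eta I E F H ->
        forall p : {poly C}, I p <-> ZV u E F H p).
Proof.
split; first split.
- case=> w [wv gen]; exists (ZV u E F H); split; first exact: ZV_ideal hV.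
  exact: (whittaker_is_induced hV hu heta wv gen).
- case=> I [_ [w [wv ann_w univ]]]; exists w; split=> //.
  exact: induced_generates hV wv ann_w univ.
- move=> I idealI [w [wv ann_w univ]].
  exact: induced_ideal_ZV hV wv ann_w univ idealI heta hu.
Qed.
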